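(* Define the sequence $(\psi_n)_{n\ge1}$ by $\psi_1=1$ and, for $n\ge2$, $$\psi_n=\Big(1+\frac1n\Big)\psi_{n-1}\ \text{ if $n$ is even},\qquad \psi_n=\Big(1+\frac1n\Big)\psi_{n-1}-\frac{2}{n}\psi_{(n-1)/2}\ \text{ if $n$ is odd}.$$ Then $\lim_{n\to\infty}\psi_n=\dfrac{1}{2-2\ln2}$. Equivalently, the Taylor coefficients $\varphi_n=n\psi_n$ of the solution $\Phi$ of $\int_0^1\Phi(rz+(1-r)z^2)\,dr=\frac12\Phi(z)$, $\Phi(0)=0$, $\Phi'(0)=1$, satisfy $\varphi_n/n\to\frac1{2(1-\ln 2)}$. *)

From Stdlib Require Import Reals Arith.
Open Scope R_scope.

(* The recursion defining psi_n (n >= 1); values at n = 0 are irrelevant. *)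
Definition psi_rec (psi : nat -> R) : Prop :=
  psi 1%nat = 1 /\
  forall n : nat, (2 <= n)%nat ->
    (Nat.even n = true -> psi n = (1 + / INR n) * psi (n - 1)%nat) /\
    (Nat.even n = false ->
       psi n = (1 + / INR n) * psi (n - 1)%nat - 2 / INR n * psi ((n - 1) / 2)%nat).

From Stdlib Require Import Reals Arith Lia Lra Psatz.
Open Scope R_scope.

(* Write L = 1 / (2 - 2 ln 2), so that L (1 - ln 2) = 1/2.
   Summing the recursion telescopically gives the integral form
     psi_{2m+1} = (1 + 1/(2m+1)) (1/2 + sum_{k=m+1}^{2m} psi_k / (k+1)),
   and psi_{2m+2} = (1 + 1/(2m+2)) psi_{2m+1}.  The harmonic weights of the
   window [m+1, 2m] sum to h_m = ln 2 - O(1/m), and L is exactly the fixed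
   point of x |-> 1/2 + (ln 2) x.  Hence, if |psi_k - L| <= B on the window,
   then |psi_n - L| <= theta B + O(1/m) for n = 2m+1, 2m+2, with the
   contraction factor theta = (1 + ln 2)/2 < 1.
   The file first develops finite range sums, the logarithmic bounds on the
   harmonic window, and an abstract principle: a sequence satisfying such a
   window contraction tends to 0.  It then derives the integral form of the
   recursion, the contraction estimate for |psi_n - L|, and the theorem. *)

Fixpoint psum (f : nat -> R) (n : nat) : R :=
  match n with
  | O => 0
  | S k => psum f k + f k
  end.

Lemma psum_succ (f : nat -> R) (n : nat) : psum f (S n) = psum f n + f n.
Proof. reflexivity. Qed.

Definition rsum (f : nat -> R) (a b : nat) : R := psum f b - psum f a.

Lemma rsum_succ (f : nat -> R) (a b : nat) : rsum f a (S b) = rsum f a b + f b.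
Proof. unfold rsum; simpl; ring. Qed.

Lemma rsum_empty (f : nat -> R) (a : nat) : rsum f a a = 0.
Proof. unfold rsum; ring. Qed.

Lemma rsum_ext (f g : nat -> R) (a b : nat) :
  (forall k, f k = g k) -> rsum f a b = rsum g a b.
Proof.
  intros Hfg; assert (Hp : forall n, psum f n = psum g n).
  { induction n as [|n IH]; simpl; [reflexivity | rewrite IH, Hfg; reflexivity]. }
  unfold rsum; rewrite !Hp; reflexivity.
Qed.

Lemma rsum_lin (c : R) (f g : nat -> R) (a b : nat) :
  rsum (fun k => c * f k + g k) a b = c * rsum f a b + rsum g a b.
Proof.
  assert (Hp : forall n, psum (fun k => c * f k + g k) n = c * psum f n + psum g n).
  { induction n as [|n IH]; simpl; [ring | rewrite IH; ring]. }
  unfold rsum; rewrite !Hp; ring.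
Qed.

Lemma rsum_telescope (g : nat -> R) (a b : nat) :
  rsum (fun k => g (S k) - g k) a b = g b - g a.
Proof.
  assert (Hp : forall n, psum (fun k => g (S k) - g k) n = g n - g O).
  { induction n as [|n IH]; simpl; [ring | rewrite IH; ring]. }
  unfold rsum; rewrite !Hp; ring.
Qed.

Lemma rsum_le (f g : nat -> R) (a b : nat) : (a <= b)%nat ->
  (forall k, (a <= k < b)%nat -> f k <= g k) -> rsum f a b <= rsum g a b.
Proof.
  intros Hab Hfg; induction Hab as [|b Hab IH].
  - rewrite !rsum_empty; lra.
  - rewrite !rsum_succ.
    assert (f b <= g b) by (apply Hfg; lia).
    assert (rsum f a b <= rsum g a b) by (apply IH; intros; apply Hfg; lia).
    lra.
Qed.

Lemma rsum_abs_le (f g : nat -> R) (B : R) (a b : nat) : (a <= b)%nat ->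
  (forall k, (a <= k < b)%nat -> Rabs (f k) <= B * g k) ->
  Rabs (rsum f a b) <= B * rsum g a b.
Proof.
  intros Hab Hfg; induction Hab as [|b Hab IH].
  - rewrite !rsum_empty, Rabs_R0; lra.
  - rewrite !rsum_succ.
    assert (Rabs (f b) <= B * g b) by (apply Hfg; lia).
    assert (Rabs (rsum f a b) <= B * rsum g a b) by (apply IH; intros; apply Hfg; lia).
    eapply Rle_trans; [apply Rabs_triang | lra].
Qed.

Lemma ln_le_sub1 (y : R) : 0 < y -> ln y <= y - 1.
Proof.
  intros Hy.
  destruct (Req_dec y (exp (y - 1))) as [E|E].
  - rewrite E at 1; rewrite ln_exp; lra.
  - rewrite <- (ln_exp (y - 1)); left; apply ln_increasing; [exact Hy|].
    pose proof (exp_ineq1_le (y - 1)); lra.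
Qed.

Lemma ln2_bounds : 0 < ln 2 < 1.
Proof.
  split; [pose proof ln_lt_2; lra|].
  rewrite <- (ln_exp 1); apply ln_increasing; [lra|].
  pose proof (exp_ineq1 1); lra.
Qed.

(* The increment of [ln] on [x, x+1] lies between [1/(x+1)] and [1/x]:
   this is what compares harmonic sums with logarithms. *)
Lemma ln_increment (x : R) : 0 < x -> / (x + 1) <= ln (x + 1) - ln x <= / x.
Proof.
  intros Hx.
  assert (Hq : forall u v, 0 < u -> 0 < v -> ln (u / v) = ln u - ln v).
  { intros u v Hu Hv; unfold Rdiv; rewrite ln_mult, ln_Rinv;
      [ring | exact Hv | exact Hu | apply Rinv_0_lt_compat; exact Hv]. }
  pose proof (ln_le_sub1 (x / (x + 1)) ltac:(apply Rdiv_lt_0_compat; lra)) as Hl.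
  pose proof (ln_le_sub1 ((x + 1) / x) ltac:(apply Rdiv_lt_0_compat; lra)) as Hu.
  rewrite Hq in Hl, Hu by lra.
  replace (x / (x + 1) - 1) with (- / (x + 1)) in Hl by (field; lra).
  replace ((x + 1) / x - 1) with (/ x) in Hu by (field; lra).
  lra.
Qed.

Lemma harmonic_window (m : nat) :
  ln 2 - / (INR m + 1) <= rsum (fun k => / (INR k + 1)) (m + 1) (2 * m + 1) <= ln 2.
Proof.
  pose proof (pos_INR m) as Hm.
  split.
  - eapply Rle_trans;
      [| apply (rsum_le (fun k => ln (INR (S k) + 1) - ln (INR k + 1))); [lia|]].
    + rewrite (rsum_telescope (fun k => ln (INR k + 1))).
      rewrite !plus_INR, mult_INR; simpl INR.
      replace ((1 + 1) * INR m + 1 + 1) with (2 * (INR m + 1)) by ring.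
      rewrite ln_mult by lra.
      pose proof (ln_increment (INR m + 1) ltac:(lra)); lra.
    + intros k _; rewrite S_INR; pose proof (pos_INR k).
      pose proof (ln_increment (INR k + 1) ltac:(lra)); lra.
  - eapply Rle_trans;
      [apply (rsum_le _ (fun k => ln (INR (S k)) - ln (INR k))); [lia|] |].
    + intros k Hk; rewrite S_INR. assert (1 <= INR k) by (apply (le_INR 1); lia).
      pose proof (ln_increment (INR k) ltac:(lra)); lra.
    + rewrite (rsum_telescope (fun k => ln (INR k))).
      rewrite !plus_INR, mult_INR; simpl INR.
      replace ((1 + 1) * INR m + 1) with (2 * INR m + 1) by ring.
      assert (ln (2 * INR m + 1) < ln (2 * (INR m + 1))) by (apply ln_increasing; lra).
      rewrite ln_mult in * by lra; lra.
Qed.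

Lemma odd_or_even_succ (n : nat) : (1 <= n)%nat ->
  exists m, (n = 2 * m + 1 \/ n = 2 * m + 2)%nat.
Proof.
  intros Hn; destruct (Nat.Even_or_Odd n) as [[k Hk] | [k Hk]].
  - exists (k - 1)%nat; lia.
  - exists k; lia.
Qed.

Lemma inv_succ_eventually_le (a : R) : 0 < a ->
  exists m0, forall m, (m0 <= m)%nat -> / (INR m + 1) <= a.
Proof.
  intros Ha; destruct (INR_unbounded (/ a)) as [m0 Hm0].
  exists m0; intros m Hm; apply le_INR in Hm.
  rewrite <- (Rinv_inv a); apply Rinv_le_contravar;
    [apply Rinv_0_lt_compat; exact Ha | lra].
Qed.

(* The proof first shows
   that e is bounded (a large enough bound propagates from one dyadic block
   to the next), then improves a tail bound B to theta B + c/(N+1) on a later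
   tail, and iterates. *)
Section WindowContraction.

Variables (e : nat -> R) (theta c : R) (m0 : nat).
Hypothesis theta_range : 0 <= theta < 1.
Hypothesis c_nonneg : 0 <= c.
Hypothesis window_step : forall (m n : nat) (B : R), (m0 <= m)%nat -> 0 <= B ->
  (forall k, (m + 1 <= k <= 2 * m)%nat -> e k <= B) ->
  (n = 2 * m + 1 \/ n = 2 * m + 2)%nat ->
  e n <= theta * B + c * / (INR m + 1).

Lemma error_mono (N m : nat) : (N <= m)%nat -> c * / (INR m + 1) <= c * / (INR N + 1).
Proof.
  intros HNm; apply le_INR in HNm; pose proof (pos_INR N).
  apply Rmult_le_compat_l; [exact c_nonneg | apply Rinv_le_contravar; lra].
Qed.

Lemma tail_bound_propagates (N : nat) (B : R) : (m0 <= N)%nat -> 0 <= B ->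
  theta * B + c * / (INR N + 1) <= B ->
  (forall k, (N + 1 <= k <= 2 * N + 2)%nat -> e k <= B) ->
  forall n, (N + 1 <= n)%nat -> e n <= B.
Proof.
  intros HN HB Hstable Hinit n.
  induction n as [n IH] using lt_wf_ind; intros Hn.
  destruct (le_lt_dec n (2 * N + 2)) as [Hsmall | Hlarge]; [apply Hinit; lia|].
  destruct (odd_or_even_succ n ltac:(lia)) as [m Hm].
  eapply Rle_trans; [apply (window_step m n B); [lia | exact HB | | exact Hm]|].
  - intros k Hk; apply IH; lia.
  - pose proof (error_mono N m ltac:(lia)); lra.
Qed.

Lemma initial_bound (N : nat) : exists B, 0 <= B /\ forall k, (k <= N)%nat -> e k <= B.
Proof.
  induction N as [|N [B [HB HkB]]].
  - exists (Rmax 0 (e O)); split; [apply Rmax_l|].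
    intros k Hk; replace k with O by lia; apply Rmax_r.
  - exists (Rmax B (e (S N))); split.
    + eapply Rle_trans; [exact HB | apply Rmax_l].
    + intros k Hk; destruct (Nat.eq_dec k (S N)) as [-> | Hne]; [apply Rmax_r|].
      eapply Rle_trans; [apply HkB; lia | apply Rmax_l].
Qed.

(* The sequence is bounded: from m0 on, the bound
   max(sup_{k <= 2 m0 + 2} e_k, c / ((1 - theta)(m0 + 1))) is stable. *)
Lemma window_bounded : exists B, 0 <= B /\ forall n, e n <= B.
Proof.
  destruct (initial_bound (2 * m0 + 2)) as [B0 [HB0 Hinit]].
  pose proof (pos_INR m0).
  set (B := Rmax B0 (c * / (INR m0 + 1) / (1 - theta))).
  assert (HB0B : B0 <= B) by apply Rmax_l.
  assert (Hstable : theta * B + c * / (INR m0 + 1) <= B).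
  { assert (Hcap : c * / (INR m0 + 1) / (1 - theta) <= B) by apply Rmax_r.
    assert (c * / (INR m0 + 1) <= (1 - theta) * B).
    { apply (Rmult_le_reg_r (/ (1 - theta))); [apply Rinv_0_lt_compat; lra|].
      replace ((1 - theta) * B * / (1 - theta)) with B by (field; lra); exact Hcap. }
    lra. }
  exists B; split; [lra|].
  intros n; destruct (le_lt_dec n m0) as [Hn | Hn].
  - eapply Rle_trans; [apply Hinit; lia | exact HB0B].
  - apply (tail_bound_propagates m0 B); try lia; try lra.
    intros k Hk; eapply Rle_trans; [apply Hinit; lia | exact HB0B].
Qed.

Lemma tail_bound_improves (N : nat) (B : R) : (m0 <= N)%nat -> 0 <= B ->
  (forall n, (N + 1 <= n)%nat -> e n <= B) ->
  forall n, (2 * N + 1 <= n)%nat -> e n <= theta * B + c * / (INR N + 1).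
Proof.
  intros HN HB Htail n Hn.
  destruct (odd_or_even_succ n ltac:(lia)) as [m Hm].
  eapply Rle_trans; [apply (window_step m n B); [lia | exact HB | | exact Hm]|].
  - intros k Hk; apply Htail; lia.
  - pose proof (error_mono N m ltac:(lia)); lra.
Qed.

Lemma window_contraction_small :
  forall eps, 0 < eps -> exists N, forall n, (N <= n)%nat -> e n < eps.
Proof.
  intros eps Heps.
  destruct window_bounded as [B [HB HeB]].
  destruct (inv_succ_eventually_le ((1 - theta) * (eps / 2) / (c + 1)))
    as [K HK]; [apply Rdiv_lt_0_compat; nra|].
  assert (Herr : forall N, (K <= N)%nat -> c * / (INR N + 1) <= (1 - theta) * (eps / 2)).
  { intros N HN; specialize (HK N HN).
    assert (0 <= / (INR N + 1)) by (pose proof (pos_INR N); left; apply Rinv_0_lt_compat; lra).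
    assert (c * / (INR N + 1) <= (c + 1) * / (INR N + 1)) by nra.
    assert ((c + 1) * / (INR N + 1) <= (c + 1) * ((1 - theta) * (eps / 2) / (c + 1)))
      by (apply Rmult_le_compat_l; lra).
    replace ((c + 1) * ((1 - theta) * (eps / 2) / (c + 1))) with ((1 - theta) * (eps / 2))
      in * by (field; lra).
    lra. }
  assert (Hiter : forall j, exists N, (Nat.max m0 K <= N)%nat /\
            forall n, (N + 1 <= n)%nat -> e n <= theta ^ j * B + eps / 2).
  { induction j as [|j [N [HN Htail]]].
    - exists (Nat.max m0 K); split; [lia|]; intros n _; simpl; specialize (HeB n); lra.
    - exists (2 * N + 1)%nat; split; [lia|]; intros n Hn.
      assert (0 <= theta ^ j * B) by (apply Rmult_le_pos; [apply pow_le|]; lra).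
      eapply Rle_trans; [apply (tail_bound_improves N (theta ^ j * B + eps / 2)); [lia | lra | exact Htail | lia]|].
      pose proof (Herr N ltac:(lia)); simpl; nra. }
  destruct (pow_lt_1_zero theta ltac:(rewrite Rabs_pos_eq; lra) (eps / 2 / (B + 1)))
    as [J HJ]; [apply Rdiv_lt_0_compat; lra|].
  specialize (HJ J (le_n J)); rewrite Rabs_pos_eq in HJ by (apply pow_le; lra).
  assert (theta ^ J * B < eps / 2).
  { assert (0 <= theta ^ J) by (apply pow_le; lra).
    assert (theta ^ J * (B + 1) < eps / 2 / (B + 1) * (B + 1))
      by (apply Rmult_lt_compat_r; lra).
    replace (eps / 2 / (B + 1) * (B + 1)) with (eps / 2) in * by (field; lra).
    nra. }
  destruct (Hiter J) as [N [_ Htail]].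
  exists (N + 1)%nat; intros n Hn; specialize (Htail n Hn); lra.
Qed.

End WindowContraction.

Lemma psi_even (psi : nat -> R) (m : nat) : psi_rec psi ->
  psi (2 * m + 2)%nat = (1 + / (2 * INR m + 2)) * psi (2 * m + 1)%nat.
Proof.
  intros [_ Hrec]; destruct (Hrec (2 * m + 2)%nat ltac:(lia)) as [Heven _].
  rewrite Heven.
  - replace (2 * m + 2 - 1)%nat with (2 * m + 1)%nat by lia.
    rewrite plus_INR, mult_INR; simpl INR; do 3 f_equal; ring.
  - replace (2 * m + 2)%nat with (2 + 2 * m)%nat by lia.
    apply Nat.even_add_mul_2.
Qed.

Lemma psi_odd (psi : nat -> R) (m : nat) : psi_rec psi -> (1 <= m)%nat ->
  psi (2 * m + 1)%nat
  = (1 + / (2 * INR m + 1)) * psi (2 * m)%nat - 2 / (2 * INR m + 1) * psi m.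
Proof.
  intros [_ Hrec] Hm; destruct (Hrec (2 * m + 1)%nat ltac:(lia)) as [_ Hodd].
  rewrite Hodd.
  - replace (2 * m + 1 - 1)%nat with (2 * m)%nat by lia.
    replace ((2 * m) / 2)%nat with m by (rewrite Nat.mul_comm, Nat.div_mul; lia).
    rewrite plus_INR, mult_INR; simpl INR; repeat f_equal; ring.
  - replace (2 * m + 1)%nat with (1 + 2 * m)%nat by lia.
    apply Nat.even_add_mul_2.
Qed.

(* The subtracted term of the odd recursion exactly removes the term
   leaving the window when m increases. *)
Lemma psi_odd_window (psi : nat -> R) : psi_rec psi -> forall m : nat,
  psi (2 * m + 1)%nat
  = (1 + / (2 * INR m + 1))
    * (1 / 2 + rsum (fun k => psi k / (INR k + 1)) (m + 1) (2 * m + 1)).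
Proof.
  intros Hr m; induction m as [|m IH].
  - destruct Hr as [H1 _]; simpl; rewrite H1, rsum_empty; field.
  - pose proof (pos_INR m) as Hm.
    set (f := fun k => psi k / (INR k + 1)) in *.
    assert (Hwin : rsum f (S m + 1) (2 * S m + 1)
                   = rsum f (m + 1) (2 * m + 1) + f (2 * m + 1)%nat
                     + f (2 * m + 2)%nat - f (m + 1)%nat).
    { unfold rsum.
      replace (2 * S m + 1)%nat with (S (S (2 * m + 1))) by lia.
      replace (S m + 1)%nat with (S (m + 1)) by lia.
      rewrite !psum_succ; replace (S (2 * m + 1)) with (2 * m + 2)%nat by lia; ring. }
    assert (Hwin0 : 1 / 2 + rsum f (m + 1) (2 * m + 1)
                    = (2 * INR m + 1) / (2 * INR m + 2) * psi (2 * m + 1)%nat).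
    { rewrite IH; field; lra. }
    rewrite Hwin.
    replace (2 * S m + 1)%nat with (2 * (m + 1) + 1)%nat by lia.
    rewrite (psi_odd psi (m + 1)) by (exact Hr || lia).
    replace (2 * (m + 1))%nat with (2 * m + 2)%nat by lia.
    replace (1 / 2 + (rsum f (m + 1) (2 * m + 1) + f (2 * m + 1)%nat
                      + f (2 * m + 2)%nat - f (m + 1)%nat))
      with ((1 / 2 + rsum f (m + 1) (2 * m + 1)) + f (2 * m + 1)%nat
            + f (2 * m + 2)%nat - f (m + 1)%nat) by ring.
    rewrite Hwin0; unfold f; rewrite (psi_even psi m Hr).
    rewrite !S_INR, !plus_INR, !mult_INR; simpl INR.
    field; lra.
Qed.

Lemma near_fixed_point (L l h t D B : R) :
  0 < l < 1 -> 0 < L -> L * (1 - l) = 1 / 2 ->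
  0 <= t <= (1 - l) / 2 -> h <= l -> 0 <= B -> Rabs D <= B * h ->
  Rabs ((1 + t) * (1 / 2 + L * h + D) - L) <= (1 + l) / 2 * B + L * (t + 2 * (l - h)).
Proof.
  intros Hl HL Hfix Ht Hh HB HD.
  replace ((1 + t) * (1 / 2 + L * h + D) - L)
    with (t * L - (1 + t) * (L * (l - h)) + (1 + t) * D)
    by (rewrite <- Hfix; ring).
  pose proof (Rle_abs D) as HDu; pose proof (Rle_abs (- D)) as HDl; rewrite Rabs_Ropp in HDl.
  assert (Hc : (1 + t) * (B * h) <= (1 + l) / 2 * B).
  { assert (B * h <= B * l) by (apply Rmult_le_compat_l; lra).
    assert ((1 + t) * l <= (1 + l) / 2) by nra.
    assert ((1 + t) * (B * h) <= (1 + t) * (B * l)) by (apply Rmult_le_compat_l; lra).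
    nra. }
  assert (0 <= L * (l - h)) by (apply Rmult_le_pos; lra).
  apply Rabs_le; split; nra.
Qed.

Definition psi_limit : R := 1 / (2 - 2 * ln 2).

Lemma psi_limit_pos : 0 < psi_limit.
Proof. pose proof ln2_bounds; unfold psi_limit; apply Rdiv_lt_0_compat; lra. Qed.

Lemma psi_limit_fixed : psi_limit * (1 - ln 2) = 1 / 2.
Proof. pose proof ln2_bounds; unfold psi_limit; field; lra. Qed.

Lemma psi_window_step (psi : nat -> R) (m n : nat) (B : R) : psi_rec psi ->
  2 / (2 * INR m + 1) <= (1 - ln 2) / 2 -> 0 <= B ->
  (forall k, (m + 1 <= k <= 2 * m)%nat -> Rabs (psi k - psi_limit) <= B) ->
  (n = 2 * m + 1 \/ n = 2 * m + 2)%nat ->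
  Rabs (psi n - psi_limit) <= (1 + ln 2) / 2 * B + 4 * psi_limit * / (INR m + 1).
Proof.
  intros Hr Hm0 HB Hwin Hn.
  pose proof (pos_INR m) as Hm; pose proof ln2_bounds; pose proof psi_limit_pos.
  set (L := psi_limit) in *.
  set (h := rsum (fun k => / (INR k + 1)) (m + 1) (2 * m + 1)).
  set (D := rsum (fun k => (psi k - L) / (INR k + 1)) (m + 1) (2 * m + 1)).
  assert (Hh : ln 2 - / (INR m + 1) <= h <= ln 2) by apply harmonic_window.
  assert (Hsplit : rsum (fun k => psi k / (INR k + 1)) (m + 1) (2 * m + 1) = L * h + D).
  { rewrite (rsum_ext _ (fun k => L * / (INR k + 1) + (psi k - L) / (INR k + 1))),
      rsum_lin; [reflexivity|].
    intros k; pose proof (pos_INR k); field; lra. }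
  assert (HD : Rabs D <= B * h).
  { apply rsum_abs_le; [lia|]. intros k Hk; pose proof (pos_INR k).
    unfold Rdiv; rewrite Rabs_mult, (Rabs_pos_eq (/ _)) by (left; apply Rinv_0_lt_compat; lra).
    apply Rmult_le_compat_r; [left; apply Rinv_0_lt_compat; lra | apply Hwin; lia]. }
  assert (Hinv : 0 <= / (INR m + 1)) by (left; apply Rinv_0_lt_compat; lra).
  assert (Ht : forall t, 0 <= t <= 2 / (2 * INR m + 1) ->
            Rabs ((1 + t) * (1 / 2 + L * h + D) - L)
            <= (1 + ln 2) / 2 * B + 4 * L * / (INR m + 1)).
  { intros t Ht.
    assert (2 / (2 * INR m + 1) <= 2 * / (INR m + 1)).
    { unfold Rdiv; apply Rmult_le_compat_l; [lra | apply Rinv_le_contravar; lra]. }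
    eapply Rle_trans;
      [apply (near_fixed_point L (ln 2) h t D B);
         [lra | lra | apply psi_limit_fixed | lra | lra | lra | exact HD]|].
    assert (L * (t + 2 * (ln 2 - h)) <= L * (4 * / (INR m + 1)))
      by (apply Rmult_le_compat_l; lra).
    lra. }
  assert (Hodd : psi (2 * m + 1)%nat = (1 + / (2 * INR m + 1)) * (1 / 2 + L * h + D)).
  { rewrite (psi_odd_window psi Hr m), Hsplit; ring. }
  assert (0 < / (2 * INR m + 1)) by (apply Rinv_0_lt_compat; lra).
  destruct Hn as [-> | ->].
  - rewrite Hodd; apply Ht; unfold Rdiv; lra.
  - rewrite (psi_even psi m Hr), Hodd.
    replace ((1 + / (2 * INR m + 2)) * ((1 + / (2 * INR m + 1)) * (1 / 2 + L * h + D)))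
      with ((1 + 2 / (2 * INR m + 1)) * (1 / 2 + L * h + D)) by (field; lra).
    apply Ht; unfold Rdiv; lra.
Qed.

Theorem mainTheorem6 (psi : nat -> R) :
  psi_rec psi -> Un_cv psi (1 / (2 - 2 * ln 2)).
Proof.
  intros Hr eps Heps.
  pose proof ln2_bounds.
  destruct (inv_succ_eventually_le ((1 - ln 2) / 4)) as [m0 Hm0]; [lra|].
  assert (Hsmall : forall m, (m0 <= m)%nat -> 2 / (2 * INR m + 1) <= (1 - ln 2) / 2).
  { intros m Hm; specialize (Hm0 m Hm); pose proof (pos_INR m).
    assert (/ (2 * INR m + 1) <= / (INR m + 1)) by (apply Rinv_le_contravar; lra).
    unfold Rdiv; lra. }
  destruct (window_contraction_small (fun n => Rabs (psi n - psi_limit))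
              ((1 + ln 2) / 2) (4 * psi_limit) m0) with (eps := eps) as [N HN].
  - lra.
  - pose proof psi_limit_pos; lra.
  - intros m n B Hm HB Hwin Hn.
    exact (psi_window_step psi m n B Hr (Hsmall m Hm) HB Hwin Hn).
  - exact Heps.
  - exists N; intros n Hn; exact (HN n Hn).
Qed.
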